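(* Let $m,n\ge 1$, $A=[a_{ij}]$ an $m\times n$ matrix with entries in $\mathbb{R}\cup\{-\infty\}$, and $B=[b_{ji}]$ an $n\times m$ matrix with entries in $\mathbb{R}\cup\{+\infty\}$. Let $\lambda\in\mathbb{R}$ be an eigenvalue of the bipartite min-max-plus system $\mathcal{M}$ defined by $A,B$, let $A_\lambda=-\lambda\otimes A$, $B_\lambda=-\lambda\otimes B$, and define the sequence $x^*(l+1)=\mathcal{N}(x^*(l))$ for $l=0,1,2,\dots$ from an initial state vector $x^*(0)$. Suppose $x^*(r)=x^*(s)$ for some integers $r>s\ge 0$ and let $v=x^*(s)\oplus x^*(s+1)\oplus\cdots\oplus x^*(r-1)$. Then $\mathcal{N}(v)\ge v$ (componentwise).
   Context: Notation: $\epsilon=-\infty$, $\tau=+\infty$. For scalars, $r\oplus s=\max\{r,s\}$, $r\oplus' s=\min\{r,s\}$, $r\otimes s=r+s$; $\oplus$ of vectors is the componentwise maximum. For a scalar $\alpha\in\mathbb{R}$ and a matrix or vector $X$, $\alpha\otimes X$ adds $\alpha$ to every entry (infinite entries are unchanged). Max-plus product: $(A\otimes w)_i=\max_{1\le j\le n}(a_{ij}+w_j)$; min-plus product: $(B\otimes' u)_j=\min_{1\le i\le m}(b_{ji}+u_i)$. Convention for infinite sums: $-\infty+x=-\infty$ for $x\ne+\infty$, $+\infty+x=+\infty$ for $x\ne-\infty$, and in max-plus products $-\infty$ is absorbing while in min-plus products $+\infty$ is absorbing. For $v=\begin{pmatrix}u\\ w\end{pmatrix}$ ($u$ of length $m$,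 $w$ of length $n$): $\mathcal{M}(v)=\begin{pmatrix}A\otimes w\\ B\otimes' u\end{pmatrix}$ and $\mathcal{N}(v)=\begin{pmatrix}A_\lambda\otimes w\\ B_\lambda\otimes' u\end{pmatrix}$. A real number $\lambda$ is an eigenvalue of the system $x(l+1)=\mathcal{M}(x(l))$ if there exists $v\in\mathbb{R}^{m+n}$ with $\mathcal{M}(v)=\lambda\otimes v$. *)

From HB Require Import structures.
From mathcomp Require Import all_boot all_order all_algebra.
From mathcomp Require Import all_classical all_reals.
From mathcomp Require Import ereal.
Set Implicit Arguments. Unset Strict Implicit. Unset Printing Implicit Defensive.
Import Order.TTheory GRing.Theory Num.Theory.
Local Open Scope ring_scope.
Local Open Scope ereal_scope.

(* Bipartite min-max-plus systems over the extended reals \bar R.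
   epsilon = -oo, tau = +oo.  A state vector v = (u; w) with u of length m
   and w of length n is represented as a pair of functions. *)

Definition state (R : realType) (m n : nat) : Type :=
  (('I_m -> \bar R) * ('I_n -> \bar R))%type.

Definition maxplus (R : realType) (m n : nat) (A : 'M[\bar R]_(m, n))
  (w : 'I_n -> \bar R) (i : 'I_m) : \bar R :=
  \big[Order.max/-oo]_(j < n) (A i j + w j).

Definition minplus (R : realType) (m n : nat) (B : 'M[\bar R]_(n, m))
  (u : 'I_m -> \bar R) (j : 'I_n) : \bar R :=
  \big[Order.min/+oo]_(i < m) (B j i + u i).

Definition Mop (R : realType) (m n : nat) (A : 'M[\bar R]_(m, n))
  (B : 'M[\bar R]_(n, m)) (v : state R m n) : state R m n :=
  (maxplus A v.2, minplus B v.1).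

Definition escale (R : realType) (p q : nat) (alpha : R)
  (X : 'M[\bar R]_(p, q)) : 'M[\bar R]_(p, q) :=
  \matrix_(i, j) (alpha%:E + X i j).

Definition Nop (R : realType) (m n : nat) (A : 'M[\bar R]_(m, n))
  (B : 'M[\bar R]_(n, m)) (lambda : R) : state R m n -> state R m n :=
  Mop (escale (- lambda)%R A) (escale (- lambda)%R B).

Definition is_eigenvalue (R : realType) (m n : nat) (A : 'M[\bar R]_(m, n))
  (B : 'M[\bar R]_(n, m)) (lambda : R) : Prop :=
  exists (u : 'I_m -> R) (w : 'I_n -> R),
    Mop A B (fun i => (u i)%:E, fun j => (w j)%:E)
    = (fun i => (lambda + u i)%R%:E, fun j => (lambda + w j)%R%:E).

Definition orbitN (R : realType) (m n : nat) (A : 'M[\bar R]_(m, n))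
  (B : 'M[\bar R]_(n, m)) (lambda : R) (x0 : state R m n) (l : nat)
  : state R m n :=
  iter l (Nop A B lambda) x0.

Definition orbit_max (R : realType) (m n : nat) (x : nat -> state R m n)
  (s r : nat) : state R m n :=
  (fun i => \big[Order.max/-oo]_(s <= l < r) (x l).1 i,
   fun j => \big[Order.max/-oo]_(s <= l < r) (x l).2 j).

Definition state_le (R : realType) (m n : nat) (x y : state R m n) : Prop :=
  (forall i, x.1 i <= y.1 i) /\ (forall j, x.2 j <= y.2 j).

(* Every element of the cycle x*(s), ..., x*(r-1) is the image under N of an
   element of the same cycle, because x*(s) = x*(r) = N(x*(r-1)).  Since N is
   monotone and each x*(k) lies below v, every x*(l) = N(x*(k)) lies below
   N(v), and so does their maximum v. *)

From HB Require Import structures.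
From mathcomp Require Import all_boot all_order all_algebra.
From mathcomp Require Import all_classical all_reals.
From mathcomp Require Import ereal.
From mathcomp Require Import zify.
Set Implicit Arguments. Unset Strict Implicit. Unset Printing Implicit Defensive.
Import Order.TTheory.
Local Open Scope ring_scope.
Local Open Scope ereal_scope.

Lemma iter_cycle_pred (T : Type) (f : T -> T) (a : T) (s r l : nat) :
  iter r f a = iter s f a -> (s <= l < r)%N ->
  exists2 k, (s <= k < r)%N & iter l f a = f (iter k f a).
Proof.
move=> cyc /andP[]; rewrite leq_eqVlt => /orP[/eqP <-{l} | ltsl] ltlr.
  exists r.-1; first lia.
  by rewrite -cyc -iterS prednK //; lia.
exists l.-1; first lia.
by rewrite -iterS prednK //; lia.
Qed.

Section StateOrder.

Variables (R : realType) (m n : nat).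

Lemma Nop_mono (A : 'M[\bar R]_(m, n)) (B : 'M[\bar R]_(n, m)) (lambda : R)
  (x y : state R m n) :
  state_le x y -> state_le (Nop A B lambda x) (Nop A B lambda y).
Proof.
case=> le1 le2; split => i /=.
  by apply: le_bigmax2 => j _; apply: leeD2l.
by apply: le_bigmin2 => j _; apply: leeD2l.
Qed.

Lemma orbit_max_ub (x : nat -> state R m n) (s r l : nat) :
  (s <= l < r)%N -> state_le (x l) (orbit_max x s r).
Proof.
by move=> hl; split => i; apply: (le_bigmax_seq _ l) => //; rewrite mem_index_iota.
Qed.

Lemma orbit_max_least (x : nat -> state R m n) (s r : nat) (y : state R m n) :
  (forall l, (s <= l < r)%N -> state_le (x l) y) ->
  state_le (orbit_max x s r) y.
Proof.
move=> ub; split => i; rewrite /= big_seq_cond;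
  (apply: bigmax_le; first exact: leNye);
  by move=> l /andP[+ _]; rewrite mem_index_iota => /ub[].
Qed.

Lemma cycle_max_le_Nop (A : 'M[\bar R]_(m, n)) (B : 'M[\bar R]_(n, m))
  (lambda : R) (x0 : state R m n) (s r : nat) :
  orbitN A B lambda x0 r = orbitN A B lambda x0 s ->
  let v := orbit_max (orbitN A B lambda x0) s r in
  state_le v (Nop A B lambda v).
Proof.
move=> cyc v; apply: orbit_max_least => l hl.
have [k hk xl] := iter_cycle_pred cyc hl.
rewrite /orbitN xl; apply: Nop_mono; exact: orbit_max_ub.
Qed.

End StateOrder.

Theorem theorem3 (R : realType) (m n : nat) (hm : (0 < m)%N) (hn : (0 < n)%N)
  (A : 'M[\bar R]_(m, n)) (B : 'M[\bar R]_(n, m))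
  (hA : forall i j, A i j != +oo) (hB : forall j i, B j i != -oo)
  (lambda : R) (heig : is_eigenvalue A B lambda)
  (x0u : 'I_m -> R) (x0w : 'I_n -> R) (r s : nat) (hsr : (s < r)%N)
  (hcyc : orbitN A B lambda (fun i => (x0u i)%:E, fun j => (x0w j)%:E) r
          = orbitN A B lambda (fun i => (x0u i)%:E, fun j => (x0w j)%:E) s) :
  let x := orbitN A B lambda (fun i => (x0u i)%:E, fun j => (x0w j)%:E) in
  let v := orbit_max x s r in
  state_le v (Nop A B lambda v).
Proof. exact: cycle_max_le_Nop hcyc. Qed.
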